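(* Let $(a,b)$ be a coprime pair of positive integers, let $W=W_1\cdots W_N=W(a,b)$, let $n_L$ and $n_R$ be the numbers of letters $L$ and $R$ in $W$, and let the integers $a_j$ ($-n_R\le j\le n_L$, $j\neq 0$), $c$, and $\overline{a}_j$ ($-n_L\le j\le n_R$) be constructed as described in the context. Then \[(a_1,a_2,\dots,a_{n_L},\,c,\,a_{-n_R},\dots,a_{-2},a_{-1})=(\overline{a}_{-n_L},\dots,\overline{a}_0,\dots,\overline{a}_{n_R}).\]
   Context: Word: for coprime positive $(a,b)$, set $(a_0,b_0)=(a,b)$; if $a_i>b_i$ let $w_{i+1}=L$, $(a_{i+1},b_{i+1})=(a_i-b_i,b_i)$; if $a_i<b_i$ let $w_{i+1}=R$, $(a_{i+1},b_{i+1})=(a_i,b_i-a_i)$; stop at the first $N$ with $(a_N,b_N)=(1,1)$. Then $w(a,b)=w_1\cdots w_N$ and $W(a,b)=W_1\cdots W_N$ with $W_i=w_{N+1-i}$. First sequence: each $\{a^{(i)}_j\}$ is a finite integer sequence indexed by the consecutive integers $m(i)\le j\le M(i)$ (the minimal and maximal defined index). Start with $(a^{(0)}_{-1},a^{(0)}_0,a^{(0)}_1)=(-1,-1,-1)$. For $i=1,\dots,N$, always $a^{(i)}_0=-1$, and: if $W_i=R$, set $a^{(i)}_j=a^{(i-1)}_j$ for $1<j\le M(i-1)$, $a^{(i)}_1=a^{(i-1)}_1-1$, $a^{(i)}_{-1}=-2$, and $a^{(i)}_j=a^{(i-1)}_{j+1}$ for $m(i-1)-1\le j<-1$; if $W_i=L$,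 set $a^{(i)}_j=a^{(i-1)}_j$ for $m(i-1)\le j<-1$, $a^{(i)}_{-1}=a^{(i-1)}_{-1}-1$, $a^{(i)}_1=-2$, and $a^{(i)}_j=a^{(i-1)}_{j-1}$ for $1<j\le M(i-1)+1$. After $N$ steps the index range is $-(n_R+1)\le j\le n_L+1$; put $a_j=a^{(N)}_j$ for $-n_R\le j\le n_L$, $j\ne0$, and $c=a^{(N)}_{n_L+1}+a^{(N)}_{-(n_R+1)}-2$. Second sequence: each $\{\overline{a}^{(i)}_j\}$ is indexed by consecutive integers $m(i)\le j\le M(i)$. Start with $\overline{a}^{(0)}_0=-4$. If $W_i=R$: $\overline{a}^{(i)}_{M(i-1)+1}=-2$, $\overline{a}^{(i)}_{m(i-1)}=\overline{a}^{(i-1)}_{m(i-1)}-1$, and $\overline{a}^{(i)}_j=\overline{a}^{(i-1)}_j$ for $m(i-1)<j\le M(i-1)$. If $W_i=L$: $\overline{a}^{(i)}_{M(i-1)}=\overline{a}^{(i-1)}_{M(i-1)}-1$, $\overline{a}^{(i)}_{m(i-1)-1}=-2$, and $\overline{a}^{(i)}_j=\overline{a}^{(i-1)}_j$ for $m(i-1)\le j<M(i-1)$. Put $\overline{a}_j=\overline{a}^{(N)}_j$, $-n_L\le j\le n_R$. *)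

From Stdlib Require Import ZArith List Arith Bool.
Import ListNotations.
Open Scope bool_scope.
Open Scope Z_scope.

Inductive letter := L | R.

(* w(a,b) by the subtractive Euclidean algorithm, with fuel; for coprime
   positive a, b the fuel a+b is more than enough to reach (1,1). *)
Fixpoint wfuel (k : nat) (a b : nat) : list letter :=
  match k with
  | O => []
  | S k' =>
      if andb (Nat.eqb a 1) (Nat.eqb b 1) then []
      else if Nat.ltb b a then L :: wfuel k' (a - b)%nat b
      else if Nat.ltb a b then R :: wfuel k' a (b - a)%nat
      else []
  end.

Definition w (a b : nat) : list letter := wfuel (a + b)%nat a b.
Definition W (a b : nat) : list letter := rev (w a b).

Definition isL (x : letter) : bool := match x with L => true | R => false end.
Definition isR (x : letter) : bool := match x with L => false | R => true end.
Definition nL (s : list letter) : nat := length (filter isL s).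
Definition nR (s : list letter) : nat := length (filter isR s).

(* A finite integer sequence indexed by m <= j <= M (value 0 outside). *)
Record zseq := ZSeq { lo : Z; hi : Z; val : Z -> Z }.

Definition a0 : zseq := ZSeq (-1) 1 (fun j => if (-1 <=? j) && (j <=? 1) then -1 else 0).

Definition stepA (s : zseq) (x : letter) : zseq :=
  let m := lo s in let M := hi s in let f := val s in
  match x with
  | R => ZSeq (m - 1) M (fun j =>
           if (1 <? j) && (j <=? M) then f j
           else if j =? 1 then f 1 - 1
           else if j =? 0 then -1
           else if j =? -1 then -2
           else if (m - 1 <=? j) && (j <? -1) then f (j + 1)
           else 0)
  | L => ZSeq m (M + 1) (fun j =>
           if (m <=? j) && (j <? -1) then f j
           else if j =? -1 then f (-1) - 1
           else if j =? 0 then -1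
           else if j =? 1 then -2
           else if (1 <? j) && (j <=? M + 1) then f (j - 1)
           else 0)
  end.

Definition seqA (Wd : list letter) : zseq := fold_left stepA Wd a0.

Definition a_ (Wd : list letter) (j : Z) : Z := val (seqA Wd) j.
Definition c_ (Wd : list letter) : Z :=
  val (seqA Wd) (Z.of_nat (nL Wd) + 1) + val (seqA Wd) (- (Z.of_nat (nR Wd) + 1)) - 2.

Definition b0 : zseq := ZSeq 0 0 (fun j => if j =? 0 then -4 else 0).

Definition stepB (s : zseq) (x : letter) : zseq :=
  let m := lo s in let M := hi s in let f := val s in
  match x with
  | R => ZSeq m (M + 1) (fun j =>
           if j =? M + 1 then -2
           else if j =? m then f m - 1
           else if (m <? j) && (j <=? M) then f j
           else 0)
  | L => ZSeq (m - 1) M (fun j =>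
           if j =? M then f M - 1
           else if j =? m - 1 then -2
           else if (m <=? j) && (j <? M) then f j
           else 0)
  end.

Definition seqB (Wd : list letter) : zseq := fold_left stepB Wd b0.
Definition abar_ (Wd : list letter) (j : Z) : Z := val (seqB Wd) j.

Definition lhs_list (Wd : list letter) : list Z :=
  map (fun k => a_ Wd (Z.of_nat k)) (seq 1 (nL Wd))
  ++ [c_ Wd]
  ++ map (fun k => a_ Wd (Z.of_nat k - Z.of_nat (nR Wd))) (seq 0 (nR Wd)).

Definition rhs_list (Wd : list letter) : list Z :=
  map (fun k => abar_ Wd (Z.of_nat k - Z.of_nat (nL Wd))) (seq 0 (nL Wd + nR Wd + 1)).

(* Appending a letter to W acts in the same way on both lists: appending L
   prepends -2 and decrements the last entry, appending R decrements the first
   entry and appends -2.  For the first list this is because an L shifts the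
   positive part a_1, a_2, ... one place to the right, inserts a_1 = -2 and
   decrements a_{-1}, the entry just before the end of the list (or c, when
   there are no negative indices yet); R acts symmetrically.  Both lists start
   as [-4], so they agree for every word. *)

From Stdlib Require Import ZArith List Arith Lia.
Import ListNotations.

Lemma nL_app l m : nL (l ++ m) = (nL l + nL m)%nat.
Proof. unfold nL; rewrite filter_app, length_app; reflexivity. Qed.

Lemma nR_app l m : nR (l ++ m) = (nR l + nR m)%nat.
Proof. unfold nR; rewrite filter_app, length_app; reflexivity. Qed.

Lemma seqA_snoc l x : seqA (l ++ [x]) = stepA (seqA l) x.
Proof. unfold seqA; rewrite fold_left_app; reflexivity. Qed.

Lemma seqB_snoc l x : seqB (l ++ [x]) = stepB (seqB l) x.
Proof. unfold seqB; rewrite fold_left_app; reflexivity. Qed.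

Ltac decide_tests :=
  repeat match goal with
  | |- context [?a =? ?b] => destruct (Z.eqb_spec a b)
  | |- context [?a <? ?b] => destruct (Z.ltb_spec a b)
  | |- context [?a <=? ?b] => destruct (Z.leb_spec a b)
  end; cbn [andb]; try reflexivity; lia.

Section StepValues.

Variable s : zseq.

Lemma stepA_L_neg j : lo s <= j < -1 -> val (stepA s L) j = val s j.
Proof. intros; cbn [stepA val]; decide_tests. Qed.

Lemma stepA_L_m1 : val (stepA s L) (-1) = val s (-1) - 1.
Proof. cbn [stepA val]; decide_tests. Qed.

Lemma stepA_L_1 : val (stepA s L) 1 = -2.
Proof. cbn [stepA val]; decide_tests. Qed.

Lemma stepA_L_pos j : 1 < j <= hi s + 1 -> val (stepA s L) j = val s (j - 1).
Proof. intros; cbn [stepA val]; decide_tests. Qed.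

Lemma stepA_R_pos j : 1 < j <= hi s -> val (stepA s R) j = val s j.
Proof. intros; cbn [stepA val]; decide_tests. Qed.

Lemma stepA_R_1 : val (stepA s R) 1 = val s 1 - 1.
Proof. cbn [stepA val]; decide_tests. Qed.

Lemma stepA_R_m1 : val (stepA s R) (-1) = -2.
Proof. cbn [stepA val]; decide_tests. Qed.

Lemma stepA_R_neg j : lo s - 1 <= j < -1 -> val (stepA s R) j = val s (j + 1).
Proof. intros; cbn [stepA val]; decide_tests. Qed.

Hypothesis lo_le_hi : lo s <= hi s.

Lemma stepB_L_lo_val : val (stepB s L) (lo s - 1) = -2.
Proof. cbn [stepB val]; decide_tests. Qed.

Lemma stepB_L_mid j : lo s <= j < hi s -> val (stepB s L) j = val s j.
Proof. intros; cbn [stepB val]; decide_tests. Qed.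

Lemma stepB_L_hi_val : val (stepB s L) (hi s) = val s (hi s) - 1.
Proof. cbn [stepB val]; decide_tests. Qed.

Lemma stepB_R_lo_val : val (stepB s R) (lo s) = val s (lo s) - 1.
Proof. cbn [stepB val]; decide_tests. Qed.

Lemma stepB_R_mid j : lo s < j <= hi s -> val (stepB s R) j = val s j.
Proof. intros; cbn [stepB val]; decide_tests. Qed.

Lemma stepB_R_hi_val : val (stepB s R) (hi s + 1) = -2.
Proof. cbn [stepB val]; decide_tests. Qed.

End StepValues.

Lemma lo_seqA Wd : lo (seqA Wd) = - (Z.of_nat (nR Wd) + 1).
Proof.
  induction Wd as [|[] l IH] using rev_ind; [reflexivity| |];
    rewrite seqA_snoc, nR_app; cbn; lia.
Qed.

Lemma hi_seqA Wd : hi (seqA Wd) = Z.of_nat (nL Wd) + 1.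
Proof.
  induction Wd as [|[] l IH] using rev_ind; [reflexivity| |];
    rewrite seqA_snoc, nL_app; cbn; lia.
Qed.

Lemma lo_seqB Wd : lo (seqB Wd) = - Z.of_nat (nL Wd).
Proof.
  induction Wd as [|[] l IH] using rev_ind; [reflexivity| |];
    rewrite seqB_snoc, nL_app; cbn; lia.
Qed.

Lemma hi_seqB Wd : hi (seqB Wd) = Z.of_nat (nR Wd).
Proof.
  induction Wd as [|[] l IH] using rev_ind; [reflexivity| |];
    rewrite seqB_snoc, nR_app; cbn; lia.
Qed.

Definition decr_head (s : list Z) : list Z :=
  match s with [] => [] | x :: t => x - 1 :: t end.

Definition decr_last (s : list Z) : list Z := rev (decr_head (rev s)).

Lemma decr_last_snoc s x : decr_last (s ++ [x]) = s ++ [x - 1].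
Proof. unfold decr_last; rewrite rev_app_distr; cbn; rewrite rev_involutive; reflexivity. Qed.

Lemma decr_head_app s t : s <> [] -> decr_head (s ++ t) = decr_head s ++ t.
Proof. destruct s; [contradiction | reflexivity]. Qed.

Lemma decr_last_app s t : t <> [] -> decr_last (s ++ t) = s ++ decr_last t.
Proof.
  intros Ht; destruct (exists_last Ht) as (t' & y & ->).
  rewrite app_assoc, !decr_last_snoc, app_assoc; reflexivity.
Qed.

Definition grow (s : list Z) (x : letter) : list Z :=
  match x with
  | L => -2 :: decr_last s
  | R => decr_head s ++ [-2]
  end.

Definition window (f : Z -> Z) (m : Z) (n : nat) : list Z :=
  map (fun k => f (m + Z.of_nat k)) (seq 0 n).

Lemma window_ext f g m m' n :
  (forall k, (k < n)%nat -> f (m + Z.of_nat k) = g (m' + Z.of_nat k)) ->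
  window f m n = window g m' n.
Proof. intros H; apply map_ext_in; intros k Hk; apply in_seq in Hk; apply H; lia. Qed.

Lemma window_cons f m n : window f m (S n) = f m :: window f (m + 1) n.
Proof.
  unfold window; cbn [seq map]; rewrite <- seq_shift, map_map.
  f_equal; [f_equal; lia | apply map_ext; intros; f_equal; lia].
Qed.

Lemma window_snoc f m n : window f m (S n) = window f m n ++ [f (m + Z.of_nat n)].
Proof. unfold window; rewrite seq_S, map_app; reflexivity. Qed.

Lemma window_decr_head f g m n :
  g m = f m - 1 -> (forall j, m < j < m + Z.of_nat (S n) -> g j = f j) ->
  window g m (S n) = decr_head (window f m (S n)).
Proof.
  intros Hm Hrest; rewrite !window_cons, Hm; cbn; f_equal.
  apply window_ext; intros; apply Hrest; lia.
Qed.

Lemma window_decr_last f g m n :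
  (forall j, m <= j < m + Z.of_nat n -> g j = f j) ->
  g (m + Z.of_nat n) = f (m + Z.of_nat n) - 1 ->
  window g m (S n) = decr_last (window f m (S n)).
Proof.
  intros Hrest Hlast; rewrite !window_snoc, decr_last_snoc, Hlast; f_equal.
  apply window_ext; intros; apply Hrest; lia.
Qed.

Lemma window_stepB_L s n : hi s = lo s + Z.of_nat n ->
  window (val (stepB s L)) (lo s - 1) (S (S n))
  = -2 :: decr_last (window (val s) (lo s) (S n)).
Proof.
  intros Hhi; rewrite window_cons, stepB_L_lo_val by lia.
  replace (lo s - 1 + 1) with (lo s) by lia; f_equal.
  apply window_decr_last; rewrite <- Hhi.
  - intros; apply stepB_L_mid; lia.
  - apply stepB_L_hi_val; lia.
Qed.

Lemma window_stepB_R s n : hi s = lo s + Z.of_nat n ->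
  window (val (stepB s R)) (lo s) (S (S n))
  = decr_head (window (val s) (lo s) (S n)) ++ [-2].
Proof.
  intros Hhi; rewrite window_snoc.
  replace (lo s + Z.of_nat (S n)) with (hi s + 1) by lia.
  rewrite stepB_R_hi_val; f_equal.
  apply window_decr_head.
  - apply stepB_R_lo_val; lia.
  - intros; apply stepB_R_mid; lia.
Qed.

Lemma rhs_list_window Wd :
  rhs_list Wd = window (val (seqB Wd)) (lo (seqB Wd)) (nL Wd + nR Wd + 1).
Proof. rewrite lo_seqB; apply map_ext; intros; unfold abar_; f_equal; lia. Qed.

Lemma rhs_list_snoc l x : rhs_list (l ++ [x]) = grow (rhs_list l) x.
Proof.
  rewrite !rhs_list_window, seqB_snoc, nL_app, nR_app.
  assert (Hhi : hi (seqB l) = lo (seqB l) + Z.of_nat (nL l + nR l))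
    by (rewrite lo_seqB, hi_seqB; lia).
  replace (nL l + nR l + 1)%nat with (S (nL l + nR l)) by lia.
  destruct x; cbn [nL nR filter isL isR length grow].
  - replace (nL l + 1 + (nR l + 0) + 1)%nat with (S (S (nL l + nR l))) by lia.
    exact (window_stepB_L _ _ Hhi).
  - replace (nL l + 0 + (nR l + 1) + 1)%nat with (S (S (nL l + nR l))) by lia.
    exact (window_stepB_R _ _ Hhi).
Qed.

Definition lhs_of (s : zseq) (p q : nat) : list Z :=
  window (val s) 1 p
  ++ [val s (Z.of_nat p + 1) + val s (- (Z.of_nat q + 1)) - 2]
  ++ window (val s) (- Z.of_nat q) q.

Lemma lhs_list_lhs_of Wd : lhs_list Wd = lhs_of (seqA Wd) (nL Wd) (nR Wd).
Proof.
  unfold lhs_list, lhs_of, window, a_, c_; f_equal.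
  - rewrite <- seq_shift, map_map; apply map_ext; intros; f_equal; lia.
  - f_equal; apply map_ext; intros; f_equal; lia.
Qed.

Lemma lhs_of_stepA_L s p q :
  lo s = - (Z.of_nat q + 1) -> hi s = Z.of_nat p + 1 ->
  lhs_of (stepA s L) (S p) q = -2 :: decr_last (lhs_of s p q).
Proof.
  intros Hlo Hhi; unfold lhs_of.
  rewrite window_cons, stepA_L_1, <- app_comm_cons; f_equal.
  rewrite (window_ext _ (val s) _ 1)
    by (intros; rewrite stepA_L_pos by lia; f_equal; lia).
  rewrite (stepA_L_pos _ (Z.of_nat (S p) + 1)) by lia.
  replace (Z.of_nat (S p) + 1 - 1) with (Z.of_nat p + 1) by lia.
  destruct q as [|q].
  - rewrite stepA_L_m1; cbn [window seq map].
    rewrite !app_nil_r, decr_last_snoc; do 2 f_equal.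
    change (- (Z.of_nat 0 + 1)) with (-1); lia.
  - rewrite stepA_L_neg by lia.
    rewrite (window_decr_last (val s)).
    + rewrite !app_assoc, decr_last_app; [reflexivity | discriminate].
    + intros; apply stepA_L_neg; lia.
    + replace (- Z.of_nat (S q) + Z.of_nat q) with (-1) by lia; apply stepA_L_m1.
Qed.

Lemma lhs_of_stepA_R s p q :
  lo s = - (Z.of_nat q + 1) -> hi s = Z.of_nat p + 1 ->
  lhs_of (stepA s R) p (S q) = decr_head (lhs_of s p q) ++ [-2].
Proof.
  intros Hlo Hhi; unfold lhs_of.
  rewrite window_snoc.
  replace (- Z.of_nat (S q) + Z.of_nat q) with (-1) by lia.
  rewrite stepA_R_m1, !app_assoc; f_equal.
  rewrite (window_ext _ (val s) (- Z.of_nat (S q)) (- Z.of_nat q))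
    by (intros; rewrite stepA_R_neg by lia; f_equal; lia).
  rewrite (stepA_R_neg _ (- (Z.of_nat (S q) + 1))) by lia.
  replace (- (Z.of_nat (S q) + 1) + 1) with (- (Z.of_nat q + 1)) by lia.
  rewrite <- !app_assoc.
  destruct p as [|p].
  - rewrite stepA_R_1; cbn [window seq map app decr_head]; f_equal.
    change (Z.of_nat 0 + 1) with 1; lia.
  - rewrite stepA_R_pos by lia.
    rewrite (window_decr_head (val s)).
    + rewrite decr_head_app; [reflexivity | cbn; discriminate].
    + apply stepA_R_1.
    + intros; apply stepA_R_pos; lia.
Qed.

Lemma lhs_list_snoc l x : lhs_list (l ++ [x]) = grow (lhs_list l) x.
Proof.
  rewrite !lhs_list_lhs_of, seqA_snoc, nL_app, nR_app.
  pose proof (lo_seqA l); pose proof (hi_seqA l).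
  destruct x; cbn [nL nR filter isL isR length grow]; rewrite ?Nat.add_0_r.
  - rewrite Nat.add_1_r; apply lhs_of_stepA_L; assumption.
  - rewrite Nat.add_1_r; apply lhs_of_stepA_R; assumption.
Qed.

Lemma lhs_list_eq_rhs_list Wd : lhs_list Wd = rhs_list Wd.
Proof.
  induction Wd as [|x l IH] using rev_ind; [reflexivity|].
  rewrite lhs_list_snoc, rhs_list_snoc, IH; reflexivity.
Qed.

(* The identity holds for every word; coprimality of (a, b) only guarantees
   that W a b is the word of the paper. *)
Theorem lemma2p4 (a b : nat) :
  (0 < a)%nat -> (0 < b)%nat -> Nat.gcd a b = 1%nat ->
  lhs_list (W a b) = rhs_list (W a b).
Proof. intros _ _ _; apply lhs_list_eq_rhs_list. Qed.
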